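(* Let $d \ge 1$ and equip $\mathbb{R}^d$ with the Euclidean norm $\|\cdot\|_2$. For a set $\mathcal{S}\subset\mathbb{R}^d$ write $\mathrm{dist}(x,\mathcal{S}) = \inf_{s\in\mathcal{S}}\|x-s\|_2$ and $\mathcal{B}(\mathcal{S},r) = \{x\in\mathbb{R}^d : \mathrm{dist}(x,\mathcal{S})\le r\}$. Let $\epsilon>0$ and $\delta > 2\epsilon$. Let $n$ and $B$ be two modalities, and for each class $c\in\{1,\ldots,K\}$ let $\mathcal{M}_c^{(n)},\mathcal{M}_c^{(B)}\subset\mathbb{R}^d$ be nonempty class structures such that, for each modality $m\in\{n,B\}$ and all $i\ne j$, $\inf_{u\in\mathcal{M}_i^{(m)},\,v\in\mathcal{M}_j^{(m)}}\|u-v\|_2 \ge \delta$. Let $y \ne k$ be two classes, and let $z^{(n)}\in\mathcal{B}(\mathcal{M}_y^{(n)},\epsilon)$ and $z^{(B)}\in\mathcal{B}(\mathcal{M}_k^{(B)},\epsilon)$. Let $\Phi_{n\to B}:\mathbb{R}^d\to\mathbb{R}^d$ be a map that is $\xi$-semantically consistent for some $0\le\xi\le\epsilon$, i.e. $\mathrm{dist}(\Phi_{n\to B}(u),\mathcal{M}_y^{(B)})\le\xi$ for every $u\in\mathcal{B}(\mathcal{M}_y^{(n)},\epsilon)$. Then $$\mathcal{E}_{\mathrm{inter}}^{(n\to B)} := \|\Phi_{n\to B}(z^{(n)}) - z^{(B)}\|_2^2 \ge (\delta-2\epsilon)^2.$$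
   Context: Setting: latent representations of each modality lie in $\mathbb{R}^d$. The paper assumes (latent space regularity) that representations of class $c$ from modality $m$ concentrate within distance $\epsilon$ of a class structure $\mathcal{M}_c^{(m)}$, and that distinct class structures within each modality are separated by margin $\delta>2\epsilon$. ''$z^{(n)}$ encodes class $y$'' means $z^{(n)}\in\mathcal{B}(\mathcal{M}_y^{(n)},\epsilon)$; ''$z^{(B)}$ encodes a conflicting class $k\neq y$'' means $z^{(B)}\in\mathcal{B}(\mathcal{M}_k^{(B)},\epsilon)$. In the paper the cross-modal map is the one-step map $\Phi_{n\to B}(z) = z + v_\Phi^{(n\to B)}(z,0)$ induced by a learned velocity field $v_\Phi^{(n\to B)}$, but the result only uses the stated consistency property. *)

From HB Require Import structures.
From mathcomp Require Import all_boot all_order all_algebra.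
From mathcomp Require Import all_classical reals.
Set Implicit Arguments. Unset Strict Implicit. Unset Printing Implicit Defensive.
Import Order.TTheory GRing.Theory Num.Theory.
Local Open Scope ring_scope.
Local Open Scope classical_set_scope.

Definition norm2 {R : realType} {d : nat} (x : 'rV[R]_d) : R :=
  Num.sqrt (\sum_(i < d) (x ord0 i) ^+ 2).

Definition dist {R : realType} {d : nat} (x : 'rV[R]_d) (S : set 'rV[R]_d) : R :=
  inf [set norm2 (x - s) | s in S].

Definition nbhdB {R : realType} {d : nat} (S : set 'rV[R]_d) (r : R) : set 'rV[R]_d :=
  [set x | dist x S <= r].

Definition set_sep {R : realType} {d : nat} (A B : set 'rV[R]_d) : R :=
  inf [set norm2 (u - v) | u in A & v in B].

(** Φ(z⁽ⁿ⁾) lies within ξ ≤ ε of the class structure of y in modality B, while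
    z⁽ᴮ⁾ lies within ε of the structure of k.  Since these two structures are
    δ apart, the triangle inequality gives ‖Φ(z⁽ⁿ⁾) - z⁽ᴮ⁾‖ ≥ δ - 2ε > 0, and
    squaring preserves the inequality between nonnegative reals. *)
From HB Require Import structures.
From mathcomp Require Import all_boot all_order all_algebra.
From mathcomp Require Import all_classical reals.
From mathcomp Require Import ring lra.
Set Implicit Arguments. Unset Strict Implicit. Unset Printing Implicit Defensive.
Import Order.TTheory GRing.Theory Num.Theory.
Local Open Scope ring_scope.
Local Open Scope classical_set_scope.

Lemma CauchySchwarz_sum (R : rcfType) (I : finType) (f g : I -> R) :
  \sum_i f i * g i <= Num.sqrt (\sum_i f i ^+ 2) * Num.sqrt (\sum_i g i ^+ 2).
Proof.
have sum_sqr_ge0 (h : I -> R) : 0 <= \sum_i h i ^+ 2.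
  by apply: sumr_ge0 => i _; exact: sqr_ge0.
have sqrt_sum_sqr_eq0 (h : I -> R) i : Num.sqrt (\sum_i h i ^+ 2) = 0 -> h i = 0.
  move=> /eqP; rewrite sqrtr_eq0 => sum_le0.
  have /psumr_eq0P h2_eq0 : \sum_i h i ^+ 2 = 0.
    by apply/eqP; rewrite eq_le sum_le0 sum_sqr_ge0.
  by apply/eqP; rewrite -sqrf_eq0 h2_eq0 // => j _; exact: sqr_ge0.
set a := Num.sqrt _; set b := Num.sqrt _.
have [a0|a_neq0] := eqVneq a 0.
  by rewrite a0 mul0r big1 // => i _; rewrite (sqrt_sum_sqr_eq0 f i a0) mul0r.
have [b0|b_neq0] := eqVneq b 0.
  by rewrite b0 mulr0 big1 // => i _; rewrite (sqrt_sum_sqr_eq0 g i b0) mulr0.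
have ab_gt0 : 0 < a * b by rewrite mulr_gt0 // lt_def ?a_neq0 ?b_neq0 sqrtr_ge0.
rewrite -(ler_pM2l (mulr_gt0 (ltr0Sn _ 1) ab_gt0)).
(* Summing [0 <= (b f_i - a g_i)^2] over [i]. *)
have -> : 2 * (a * b) * (a * b) = \sum_i (b ^+ 2 * f i ^+ 2 + a ^+ 2 * g i ^+ 2).
  rewrite big_split -!mulr_sumr /= -(sqr_sqrtr (sum_sqr_ge0 f)).
  by rewrite -(sqr_sqrtr (sum_sqr_ge0 g)) -/a -/b; ring.
rewrite mulr_sumr; apply: ler_sum => i _.
have := sqr_ge0 (b * f i - a * g i); nra.
Qed.

Section EuclideanNorm.
Variables (R : realType) (d : nat).
Implicit Types x y z : 'rV[R]_d.

Lemma norm2_ge0 x : 0 <= norm2 x.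
Proof. exact: sqrtr_ge0. Qed.

Lemma norm2_distC x y : norm2 (x - y) = norm2 (y - x).
Proof.
by rewrite -opprB /norm2; congr Num.sqrt; apply: eq_bigr => i _; rewrite mxE sqrrN.
Qed.

Lemma norm2D x y : norm2 (x + y) <= norm2 x + norm2 y.
Proof.
rewrite -(ler_sqr (norm2_ge0 _)) ?nnegrE ?addr_ge0 ?norm2_ge0 //.
have sqr_norm2 z : norm2 z ^+ 2 = \sum_i z ord0 i ^+ 2.
  by rewrite sqr_sqrtr // sumr_ge0 // => i _; exact: sqr_ge0.
have -> : norm2 (x + y) ^+ 2 =
    norm2 x ^+ 2 + 2 * \sum_i x ord0 i * y ord0 i + norm2 y ^+ 2.
  rewrite !sqr_norm2 mulr_sumr -!big_split /=.
  by apply: eq_bigr => i _; rewrite mxE; ring.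
have := CauchySchwarz_sum (fun i => x ord0 i) (fun i => y ord0 i).
rewrite -!/(norm2 _); nra.
Qed.

Lemma norm2_distD x y z : norm2 (x - z) <= norm2 (x - y) + norm2 (y - z).
Proof. by rewrite -[x - z](subrKA y); exact: norm2D. Qed.

End EuclideanNorm.

Section SetDistance.
Variables (R : realType) (d : nat).
Implicit Types (x z u v : 'rV[R]_d) (A B S : set 'rV[R]_d).

Lemma dist_lt_exists x S e :
  S !=set0 -> dist x S < e -> exists2 s, S s & norm2 (x - s) < e.
Proof.
move=> [s0 Ss0] /inf_lt[]; first by exists (norm2 (x - s0)), s0.
by move=> _ [s Ss <-]; exists s.
Qed.

Lemma set_sep_le A B u v : A u -> B v -> set_sep A B <= norm2 (u - v).
Proof.
move=> Au Bv; apply: ge_inf; last by exists u => //; exists v.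
by exists 0 => _ [p _ [q _ <-]]; exact: norm2_ge0.
Qed.

Lemma set_sep_le_dist A B x z : A !=set0 -> B !=set0 ->
  set_sep A B <= dist x A + norm2 (x - z) + dist z B.
Proof.
move=> A0 B0; apply/ler_addgt0Pr => e e_gt0.
have e2_gt0 : 0 < e / 2 by rewrite divr_gt0.
have [u Au xu] : exists2 u, A u & norm2 (x - u) < dist x A + e / 2.
  by apply: dist_lt_exists A0 _; rewrite ltrDl.
have [v Bv zv] : exists2 v, B v & norm2 (z - v) < dist z B + e / 2.
  by apply: dist_lt_exists B0 _; rewrite ltrDl.
have := norm2_distD u x v; rewrite (norm2_distC u x).
have := norm2_distD x z v; have := set_sep_le Au Bv; lra.
Qed.

End SetDistance.

Theorem theorem4p4 (R : realType) (d K : nat) (hd : (0 < d)%N)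
  (eps delta xi : R) (heps : 0 < eps) (hdelta : 2 * eps < delta)
  (Mn MB : 'I_K -> set 'rV[R]_d)
  (hMn0 : forall c, Mn c !=set0) (hMB0 : forall c, MB c !=set0)
  (hsepn : forall i j, i != j -> delta <= set_sep (Mn i) (Mn j))
  (hsepB : forall i j, i != j -> delta <= set_sep (MB i) (MB j))
  (y k : 'I_K) (hyk : y != k)
  (zn zB : 'rV[R]_d) (hzn : nbhdB (Mn y) eps zn) (hzB : nbhdB (MB k) eps zB)
  (Phi : 'rV[R]_d -> 'rV[R]_d) (hxi0 : 0 <= xi) (hxi : xi <= eps)
  (hcons : forall u, nbhdB (Mn y) eps u -> dist (Phi u) (MB y) <= xi) :
  (delta - 2 * eps) ^+ 2 <= (norm2 (Phi zn - zB)) ^+ 2.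
Proof.
have Phi_near : dist (Phi zn) (MB y) <= eps := le_trans (hcons zn hzn) hxi.
have sep := set_sep_le_dist (Phi zn) zB (hMB0 y) (hMB0 k).
have zB_near : dist zB (MB k) <= eps := hzB.
have gap_ge0 : 0 <= delta - 2 * eps by rewrite subr_ge0 ltW.
rewrite ler_sqr ?nnegrE ?norm2_ge0 //.
have := hsepB y k hyk; lra.
Qed.
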